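(* Let $W\in\mathbb{D}_n$ be a Dale matrix with excitatory set $\mathcal{E}$ and inhibitory set $\mathcal{I}$, and let $W'\in\mathbb{D}_{n+1}$ be a Dale matrix with excitatory set $\mathcal{E}$ and inhibitory set $\mathcal{I}\cup\{n+1\}$ such that $W'_{[n]}=W$ (the principal submatrix on $[n]$) and such that for every $i\in\mathcal{E}$: if $W'_{i(n+1)}<0$ then there exists $j\in\mathcal{I}$ with $W_{ij}<0$. Assume both $W$ and $W'$ satisfy the Ground Assumption. Then $\mathcal{C}(W)=\mathcal{C}(W')$.
   Context: Threshold-linear network: $\dot x_i=-x_i+[\sum_j W_{ij}x_j+b_i]_+$ with $[y]_+=\max(0,y)$; a fixed point is $x^*$ with $x^*=[Wx^*+b]_+$. A Dale matrix $W\in\mathbb{D}_n$ is an $n\times n$ real matrix with a partition $[n]=\mathcal{E}\sqcup\mathcal{I}$ such that $W_{ii}=0$, $W_{ji}\ge0$ for all $j$ if $i\in\mathcal{E}$, $W_{ji}\le0$ for all $j$ if $i\in\mathcal{I}$. Ground Assumption: $(I-W)_\sigma$ nonsingular for every nonempty $\sigma$ of indices. Excitatory support: $\mathrm{supp}_+x=\{i\in\mathcal{E}:x_i>0\}$. Combinatorial code: $\mathcal{C}(W)=\{\mathrm{supp}_+x^*: b\in\mathbb{R}^n_{\ge0},\ x^*\in\mathbb{R}^n_{\ge0}\text{ a fixed point of }(W,b)\}$. *)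

From HB Require Import structures.
From mathcomp Require Import all_boot all_order all_algebra.
From mathcomp Require Import reals.
Set Implicit Arguments. Unset Strict Implicit. Unset Printing Implicit Defensive.
Import Order.TTheory GRing.Theory Num.Theory.
Local Open Scope ring_scope.

Definition is_Dale (R : realType) (n : nat) (W : 'M[R]_n) (E : {set 'I_n}) : Prop :=
  (forall i, W i i = 0) /\
  (forall i j : 'I_n, (j \in E -> 0 <= W i j) /\ (j \notin E -> W i j <= 0)).

(* Principal submatrix A_sigma, indices of sigma in increasing order. *)
Definition principal_sub (R : realType) (n : nat) (A : 'M[R]_n) (s : {set 'I_n})
  : 'M[R]_#|s| :=
  \matrix_(i < #|s|, j < #|s|) A (enum_val i) (enum_val j).

Definition ground_assumption (R : realType) (n : nat) (W : 'M[R]_n) : Prop :=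
  forall s : {set 'I_n}, s != set0 -> principal_sub (1%:M - W) s \in unitmx.

Definition relu (R : realType) (y : R) : R := Num.max y 0.

Definition is_fixed_point (R : realType) (n : nat) (W : 'M[R]_n) (b x : 'cV[R]_n) : Prop :=
  x = map_mx (@relu R) (W *m x + b).

Definition nonneg_vec (R : realType) (n : nat) (v : 'cV[R]_n) : Prop :=
  forall i, 0 <= v i 0.

Definition supp_plus (R : realType) (n : nat) (E : {set 'I_n}) (x : 'cV[R]_n)
  : {set 'I_n} := [set i in E | 0 < x i 0].

Definition in_code (R : realType) (n : nat) (W : 'M[R]_n) (E : {set 'I_n})
  (S : {set 'I_n}) : Prop :=
  exists b x : 'cV[R]_n,
    nonneg_vec b /\ nonneg_vec x /\ is_fixed_point W b x /\ supp_plus E x = S.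

Definition emb (n : nat) (i : 'I_n) : 'I_n.+1 := widen_ord (leqnSn n) i.

From HB Require Import structures.
From mathcomp Require Import all_boot all_order all_algebra.
From mathcomp Require Import reals.
From mathcomp Require Import lra.
Set Implicit Arguments. Unset Strict Implicit. Unset Printing Implicit Defensive.
Import Order.TTheory GRing.Theory Num.Theory.
Local Open Scope ring_scope.

(* A nonnegative x is a fixed point of (W,b) for some b >= 0
   exactly when W x <= x componentwise (take b = x - W x), so C(W) is the set
   of excitatory supports of the nonnegative "sub-fixed" vectors of W.  The excitatory support is unchanged.
   - From W' to W: restricting a sub-fixed x' of W' to [n] leaves a deficit
     a_i = -W'_{i,n+1} x'_{n+1} >= 0 in row i.  By hypothesis every excitatory
     row with a_i > 0 receives some inhibitory input of W, so raising all old
     inhibitory neurons by a common large amount t absorbs the deficits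
     (lemma [inhibitory_compensation]); excitatory values are untouched.
   - Every support of W' avoids n+1, which is inhibitory, so it lies in the
     image of [n]. *)

Definition subfixed {R : realType} {n : nat} (W : 'M[R]_n) (x : 'cV[R]_n) : Prop :=
  nonneg_vec x /\ forall i, (W *m x) i 0 <= x i 0.

Lemma in_codeE (R : realType) n (W : 'M[R]_n) E S :
  in_code W E S <-> exists x : 'cV[R]_n, subfixed W x /\ supp_plus E x = S.
Proof.
split.
- move=> [b [x [hb [hx [hf hs]]]]]; exists x; split=> //; split=> // i.
  have -> : x i 0 = relu ((W *m x) i 0 + b i 0) by rewrite {1}hf !mxE.
  by rewrite /relu le_max lerDl hb.
- move=> [x [[hx hw] hs]]; exists (x - W *m x), x; split.
    by move=> i; have := hw i; rewrite !mxE; lra.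
  do 2!split=> //.
  rewrite /is_fixed_point addrC subrK; apply/matrixP => i j.
  by rewrite mxE /relu (ord1 j) max_l.
Qed.

Lemma eq_supp_plus (R : realType) n (E : {set 'I_n}) (x z : 'cV[R]_n) :
  (forall i, i \in E -> x i 0 = z i 0) -> supp_plus E x = supp_plus E z.
Proof.
by move=> exz; apply/setP => i; rewrite !inE; case: (boolP (i \in E)) => //= /exz ->.
Qed.

(* Raising the inhibitory neurons absorbs nonnegative per-row deficits a,
   provided every excitatory row with a positive deficit has some strictly
   inhibitory input; the excitatory coordinates are kept. *)
Lemma inhibitory_compensation (R : realType) n (W : 'M[R]_n) (E : {set 'I_n})
    (z a : 'cV[R]_n) :
  (forall i j, j \notin E -> W i j <= 0) ->
  nonneg_vec z -> nonneg_vec a ->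
  (forall i, (W *m z) i 0 - a i 0 <= z i 0) ->
  (forall i, i \in E -> 0 < a i 0 -> exists2 j, j \notin E & W i j < 0) ->
  exists x : 'cV[R]_n, subfixed W x /\ forall i, i \in E -> x i 0 = z i 0.
Proof.
move=> Winh hz ha hdef hwit.
pose d i := - \sum_(j < n | j \notin E) W i j.
have d_ge0 i : 0 <= d i by rewrite oppr_ge0 sumr_le0 // => j /Winh.
pose f i := a i 0 + a i 0 / d i.
have f_ge0 i : 0 <= f i by rewrite addr_ge0 ?divr_ge0.
pose t := \sum_i f i.
have t_ge0 : 0 <= t by rewrite sumr_ge0.
have f_le_t i : f i <= t.
  rewrite /t (bigD1 i) //= lerDl; exact: sumr_ge0.
pose x : 'cV[R]_n := \col_i (z i 0 + (if i \in E then 0 else t)).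
have Wx i : (W *m x) i 0 = (W *m z) i 0 - d i * t.
  rewrite !mxE /d mulNr opprK mulr_suml [X in _ = _ + X]big_mkcond -big_split /=.
  by apply: eq_bigr => j _; rewrite mxE mulrDr; case: (j \in E); rewrite ?mulr0 ?addr0.
exists x; split; last by move=> i iE; rewrite mxE iE addr0.
split=> [i|i]; first by rewrite mxE addr_ge0 //; case: (i \in E).
have hdi := hdef i; have hai := ha i; have hfi := f_le_t i.
have dt : 0 <= d i * t by rewrite mulr_ge0.
have hadi : 0 <= a i 0 / d i by rewrite divr_ge0.
rewrite Wx [x i 0]mxE; case: ifP => iE; last by rewrite /f in hfi; lra.
rewrite addr0; have [a0|apos] := eqVneq (a i 0) 0; first by rewrite a0 in hdi; lra.
have [|j jE Wij] := hwit i iE; first by rewrite lt_def apos.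
have dpos : 0 < d i.
  rewrite /d (bigD1 j) //= opprD.
  have : \sum_(k < n | (k \notin E) && (k != j)) W i k <= 0.
    by apply: sumr_le0 => k /andP[/Winh].
  lra.
have : a i 0 / d i * d i <= t * d i.
  by rewrite ler_wpM2r //; rewrite /f in hfi; lra.
rewrite divfK ?gt_eqF // [t * _]mulrC; lra.
Qed.

Lemma emb_lift n (i : 'I_n) : emb i = lift ord_max i.
Proof. by apply/val_inj => /=; rewrite /bump leqNgt ltn_ord. Qed.

Lemma emb_inj n : injective (@emb n).
Proof. by move=> i j /(congr1 val) /= h; apply: val_inj. Qed.

Lemma ord_max_notin_emb n (A : {set 'I_n}) : ord_max \notin @emb n @: A.
Proof.
apply/imsetP => [[i _ /(congr1 val) /= h]].
by have := ltn_ord i; rewrite -h ltnn.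
Qed.

Definition restrict {R : realType} {n : nat} (x : 'cV[R]_n.+1) : 'cV[R]_n :=
  \col_i x (emb i) 0.

Definition extend {R : realType} {n : nat} (x : 'cV[R]_n) (y : R) : 'cV[R]_n.+1 :=
  \col_k (if unlift ord_max k is Some j then x j 0 else y).

Lemma extend_emb (R : realType) n (x : 'cV[R]_n) y i : extend x y (emb i) 0 = x i 0.
Proof. by rewrite mxE emb_lift liftK. Qed.

Lemma extend_max (R : realType) n (x : 'cV[R]_n) y : extend x y ord_max 0 = y.
Proof. by rewrite mxE unlift_none. Qed.

Lemma mulmx_split (R : realType) n (W' : 'M[R]_n.+1) (x : 'cV[R]_n.+1) k :
  (W' *m x) k 0 =
  \sum_(j < n) W' k (emb j) * restrict x j 0 + W' k ord_max * x ord_max 0.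
Proof. by rewrite mxE big_ord_recr; congr (_ + _); apply: eq_bigr => j _; rewrite mxE. Qed.

Lemma supp_plus_emb (R : realType) n (E : {set 'I_n}) (x : 'cV[R]_n.+1) :
  supp_plus (@emb n @: E) x = @emb n @: supp_plus E (restrict x).
Proof.
apply/setP => k; rewrite inE; case: (unliftP ord_max k) => [i ->|->].
  by rewrite -emb_lift !(mem_imset _ _ (@emb_inj n)) !inE mxE.
by rewrite !(negbTE (ord_max_notin_emb _)).
Qed.

Section Extension.

Variables (R : realType) (n : nat) (W : 'M[R]_n) (W' : 'M[R]_n.+1).
Hypothesis W'_sub : forall i j, W' (emb i) (emb j) = W i j.
Hypothesis W'_new_col : forall k, W' k ord_max <= 0.

Lemma mulmx_restrict (x : 'cV[R]_n.+1) i :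
  (W' *m x) (emb i) 0 = (W *m restrict x) i 0 + W' (emb i) ord_max * x ord_max 0.
Proof. by rewrite mulmx_split mxE; under eq_bigr do rewrite W'_sub. Qed.

Lemma subfixed_extend (x : 'cV[R]_n) :
  W' ord_max ord_max = 0 -> subfixed W x ->
  subfixed W' (extend x (Num.max (\sum_j W' ord_max (emb j) * x j 0) 0)).
Proof.
move=> W'_diag [hx hw]; set y := Num.max _ 0.
have y_ge0 : 0 <= y by rewrite le_max lexx orbT.
have rx : restrict (extend x y) = x by apply/matrixP => i j; rewrite mxE extend_emb (ord1 j).
split=> [k|k].
  by rewrite mxE; case: (unlift ord_max k).
case: (unliftP ord_max k) => [i ->|->].
  rewrite -emb_lift mulmx_restrict rx extend_emb extend_max.
  have := hw i; have : W' (emb i) ord_max * y <= 0 by rewrite mulr_le0_ge0.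
  lra.
by rewrite mulmx_split rx W'_diag mul0r addr0 extend_max le_max lexx.
Qed.

Lemma subfixed_restrict (E : {set 'I_n}) (x' : 'cV[R]_n.+1) :
  (forall i j, j \notin E -> W i j <= 0) ->
  (forall i, i \in E -> W' (emb i) ord_max < 0 -> exists j, j \notin E /\ W i j < 0) ->
  subfixed W' x' ->
  exists x, subfixed W x /\ forall i, i \in E -> x i 0 = restrict x' i 0.
Proof.
move=> Winh hinh [hx' hw'].
pose a : 'cV[R]_n := \col_i - (W' (emb i) ord_max * x' ord_max 0).
apply: (@inhibitory_compensation R n W E _ a) => //.
- by move=> i; rewrite mxE.
- by move=> i; rewrite mxE oppr_ge0 mulr_le0_ge0.
- by move=> i; have := hw' (emb i); rewrite mulmx_restrict !mxE; lra.
- move=> i iE; rewrite mxE oppr_gt0 => neg.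
  have W'neg : W' (emb i) ord_max < 0.
    rewrite lt_def W'_new_col andbT; apply: contraTneq neg => <-.
    by rewrite mul0r ltxx.
  by have [j [jE Wij]] := hinh i iE W'neg; exists j.
Qed.

End Extension.

Theorem mainTheorem11 (R : realType) (n : nat) (W : 'M[R]_n) (W' : 'M[R]_n.+1)
  (E : {set 'I_n}) :
  is_Dale W E ->
  is_Dale W' (@emb n @: E) ->
  (forall i j : 'I_n, W' (emb i) (emb j) = W i j) ->
  (forall i : 'I_n, i \in E -> W' (emb i) ord_max < 0 ->
     exists j : 'I_n, j \notin E /\ W i j < 0) ->
  ground_assumption W ->
  ground_assumption W' ->
  (forall S : {set 'I_n}, in_code W E S <-> in_code W' (@emb n @: E) (@emb n @: S)) /\
  (forall T : {set 'I_n.+1}, in_code W' (@emb n @: E) T ->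
     exists S : {set 'I_n}, T = @emb n @: S).
Proof.
move=> [_ W_cols] [W'_diag W'_cols] W'_sub hinh _ _.
have W'_new_col k : W' k ord_max <= 0.
  by apply: (W'_cols k ord_max).2; apply: ord_max_notin_emb.
have W_inh i j : j \notin E -> W i j <= 0 by move/(W_cols i j).2.
split=> [S|T]; rewrite !in_codeE.
- split=> [[x [hx <-]]|[x' [hx' hS]]].
    eexists; split; first exact: subfixed_extend W'_sub W'_new_col _ (W'_diag _) hx.
    by rewrite supp_plus_emb (@eq_supp_plus _ _ E _ x) // => i _; rewrite mxE extend_emb.
  have [x [hx exc]] := subfixed_restrict W'_sub W'_new_col W_inh hinh hx'.
  exists x; split=> //; rewrite (eq_supp_plus exc).
  by apply: (imset_inj (@emb_inj n)); rewrite -supp_plus_emb.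
- by move=> [x' [_ <-]]; rewrite supp_plus_emb; eexists.
Qed.
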